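(* Let $\mathbf{P}_m,\mathbf{P}_M$ be probability measures on a measurable space $\mathcal{Y}$, let $r:\mathcal{Y}\to\mathbb{R}$ be measurable and integrable under both $\mathbf{P}_m$ and $\mathbf{P}_M$, and let $\omega:\mathbb{R}\to[0,1]$ be measurable and non-decreasing; set $\omega_r(y)=\omega(r(y))$, $\nu=1-\mathbf{E}_{\mathbf{P}_m}[\omega_r]$, and $\mathbf{P}_{\mathrm{RSD}}=\omega_r\mathbf{P}_m+\nu\mathbf{P}_M$ (the probability measure $B\mapsto\int_B\omega_r\,d\mathbf{P}_m+\nu\mathbf{P}_M(B)$). If $\mathbf{E}_{\mathbf{P}_M}[r]\ge\mathbf{E}_{\mathbf{P}_m}[r]$, then $$\mathbf{E}_{y\sim\mathbf{P}_{\mathrm{RSD}}}[r(y)]\ \ge\ \mathbf{E}_{y\sim\mathbf{P}_m}[r(y)].$$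
   Context: $\mathbf{P}_m$ and $\mathbf{P}_M$ represent the next-step distributions of a draft model and a target model given a fixed context, $r$ is a reward function on steps, and $\mathbf{P}_{\mathrm{RSD}}$ is the mixture distribution produced by accepting a draft step $y$ with probability $\omega(r(y))$ and otherwise sampling from the target model. *)

From HB Require Import structures.
From mathcomp Require Import all_boot all_order all_algebra.
From mathcomp Require Import all_classical all_reals all_analysis.
Set Implicit Arguments. Unset Strict Implicit. Unset Printing Implicit Defensive.
Import Order.TTheory GRing.Theory Num.Theory.

(** Accepting a draft step with probability [omega (r y)] reweights [Pm] by
  [w = omega \o r], so [E_RSD[r] = E_m[r w] + nu E_M[r]] with [nu = 1 - E_m[w]].
  Since [r] and [w] are comonotone, [(r y - E_m[r]) (w y - omega E_m[r]) >= 0];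
  integrating gives Chebyshev's association inequality [E_m[r w] >= E_m[r] E_m[w]].
  Together with [E_M[r] >= E_m[r]] and [nu >= 0] this yields
  [E_RSD[r] >= E_m[r] E_m[w] + nu E_m[r] = E_m[r]]. *)
From HB Require Import structures.
From mathcomp Require Import all_boot all_order all_algebra.
From mathcomp Require Import all_classical all_reals all_analysis measurable_realfun.
From mathcomp Require Import lra.
Import Order.TTheory GRing.Theory Num.Theory.
Local Open Scope classical_set_scope.
Local Open Scope ring_scope.

Lemma bounded_unit_interval {T : Type} {R : realType} (h : T -> R) :
  (forall x, 0 <= h x <= 1) -> [bounded h x | x in setT].
Proof.
move=> h01; exists 1; split => // M M1 x _.
by have /andP[h0 h1] := h01 x; rewrite /= ger0_norm// (le_trans h1 (ltW M1)).
Qed.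

Section integrable_EFin.
Context {d} {T : measurableType d} {R : realType} {mu : {measure set T -> \bar R}}.
Implicit Types f h : T -> R.

Lemma EFin_Rintegral {f} : mu.-integrable setT (EFin \o f) ->
  (\int[mu]_x f x)%:E = (\int[mu]_x (f x)%:E)%E.
Proof. by move=> fi; rewrite fineK// integrable_fin_num. Qed.

Lemma integrableD_EFin f h :
  mu.-integrable setT (EFin \o f) -> mu.-integrable setT (EFin \o h) ->
  mu.-integrable setT (EFin \o (fun x => f x + h x)).
Proof. by move=> fi hi; have := integrableD measurableT fi hi; apply: eq_integrable. Qed.

Lemma integrableZl_EFin (k : R) f : mu.-integrable setT (EFin \o f) ->
  mu.-integrable setT (EFin \o (fun x => k * f x)).
Proof. by move=> fi; have := integrableZl measurableT k fi; apply: eq_integrable. Qed.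

Lemma integrableMr_unit_interval {f h : T -> R} : measurable_fun setT h ->
  (forall x, 0 <= h x <= 1) -> mu.-integrable setT (EFin \o f) ->
  mu.-integrable setT (EFin \o (fun x => f x * h x)).
Proof.
move=> mh h01 fi.
by have := integrableMl measurableT fi mh (bounded_unit_interval _ h01); apply: eq_integrable.
Qed.

End integrable_EFin.

Lemma integrable_unit_interval {d} {T : measurableType d} {R : realType}
    (mu : {finite_measure set T -> \bar R}) {h : T -> R} :
  measurable_fun setT h -> (forall x, 0 <= h x <= 1) -> mu.-integrable setT (EFin \o h).
Proof.
move=> mh h01; apply: measurable_bounded_integrable => //.
  exact: fin_num_fun_lty (@fin_num_measure _ _ _ mu).
exact: bounded_unit_interval.
Qed.

Section integral_mscale.
Local Open Scope ereal_scope.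
Context {d} {T : measurableType d} {R : realType}.
Variables (m : {measure set T -> \bar R}) (k : {nonneg R}) (f : T -> \bar R).
Hypothesis fi : m.-integrable setT f.

Lemma integrable_mscale : (mscale k m).-integrable setT f.
Proof.
case/integrableP: fi => mf fioo; apply/integrableP; split => //.
rewrite ge0_integral_mscale//; last exact: measurableT_comp.
by rewrite lte_mul_pinfty.
Qed.

Lemma integral_mscale : \int[mscale k m]_x f x = k%:num%:E * \int[m]_x f x.
Proof.
have mf := measurable_int _ fi.
rewrite [LHS]integralE !ge0_integral_mscale//;
  [|exact: measurable_funeneg|exact: measurable_funepos].
rewrite -muleBr//; first by rewrite -integralE.
by apply: fin_num_adde_defr; exact: integrable_pos_fin_num.
Qed.

End integral_mscale.

Section density_measure.
Local Open Scope ereal_scope.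
Context {d} {T : measurableType d} {R : realType}.
Context (mu : {finite_measure set T -> \bar R}) {g : T -> R}.
Hypotheses (mg : measurable_fun setT g) (g01 : forall x, (0 <= g x <= 1)%R).

(* [mg'] and [g01'] are arguments only so that the measure instances below can be
   attached to the term [density_measure mu mg g01]. *)
Definition density_measure (mg' : measurable_fun setT g)
    (g01' : forall x, (0 <= g x <= 1)%R) (A : set T) : \bar R :=
  \int[mu]_(x in A) (g x)%:E.

Local Notation nu := (density_measure mg g01).

Let g_ge0 x : 0 <= (g x)%:E. Proof. by rewrite lee_fin; case/andP: (g01 x). Qed.

Let nu0 : nu set0 = 0. Proof. exact: integral_set0. Qed.

Let nu_ge0 A : 0 <= nu A. Proof. exact: integral_ge0. Qed.

Let nu_sigma_additive : semi_sigma_additive nu.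
Proof. by apply: semi_sigma_additive_nng_induced => //; exact/measurable_EFinP. Qed.

HB.instance Definition _ := isMeasure.Build _ _ _ nu nu0 nu_ge0 nu_sigma_additive.

Lemma density_measure_le A : measurable A -> nu A <= mu A.
Proof.
move=> mA; rewrite -[leRHS]mul1e -integral_cst//.
apply: ge0_le_integral => //; first exact/measurable_EFinP/measurable_funTS.
by move=> x _; rewrite lee_fin; case/andP: (g01 x).
Qed.

Let nu_fin : fin_num_fun nu.
Proof.
move=> A mA; rewrite ge0_fin_numE//.
by rewrite (le_lt_trans (density_measure_le _ mA))// ltey_eq fin_num_measure.
Qed.

HB.instance Definition _ := Measure_isFinite.Build _ _ _ nu nu_fin.

Lemma density_measure_dominates : nu `<< mu.
Proof.
apply/null_content_dominatesP => A mA muA0.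
by apply: null_set_integral => //; exact/measurable_EFinP/measurable_funTS.
Qed.

Lemma integrable_density_measure f : mu.-integrable setT f -> nu.-integrable setT f.
Proof.
case/integrableP => mf fioo; apply/integrableP; split => //.
apply: le_lt_trans fioo; apply: ge0_le_measure_integral => //.
  exact: density_measure_le.
exact: measurableT_comp.
Qed.

(* The Radon-Nikodym derivative of [nu] agrees with [g] almost everywhere, since
   both have the same integral over every measurable set. *)
Lemma integral_density_measure f : mu.-integrable setT f ->
  \int[nu]_x f x = \int[mu]_x (f x * (g x)%:E).
Proof.
move=> fi; rewrite -(Radon_Nikodym_change_of_variables density_measure_dominates) //;
  last exact: integrable_density_measure.
have dnu_int := @Radon_Nikodym_integrable _ _ _ (charge_of_finite_measure nu) mu
  density_measure_dominates.
apply: ae_eq_integral => //.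
- by apply: emeasurable_funM; [exact: measurable_int fi|exact: measurable_int dnu_int].
- by apply: emeasurable_funM; [exact: measurable_int fi|exact/measurable_EFinP].
apply: ae_eqe_mul2l; apply: integral_ae_eq => //; first exact/measurable_EFinP.
by move=> A _ mA; rewrite -Radon_Nikodym_integral//; exact: density_measure_dominates.
Qed.

End density_measure.

Lemma integral_mixture {d} {T : measurableType d} {R : realType}
    {mu : {finite_measure set T -> \bar R}} {nu P : {measure set T -> \bar R}}
    {g : T -> R} {k : R} {f : T -> \bar R} :
  measurable_fun setT g -> (forall x, 0 <= g x <= 1) -> 0 <= k ->
  (forall B, measurable B ->
     P B = (\int[mu]_(y in B) (g y)%:E + k%:E * nu B)%E) ->
  mu.-integrable setT f -> nu.-integrable setT f ->
  (\int[P]_y f y = \int[mu]_y (f y * (g y)%:E) + k%:E * \int[nu]_y f y)%E.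
Proof.
move=> mg g01 k0 PE fmu fnu.
pose Q := density_measure mu mg g01.
rewrite (eq_measure_integral (measure_add Q (mscale (NngNum k0) nu))); last first.
  by move=> B mB _; rewrite PE//; exact/esym/measure_addE.
rewrite integral_measure_add//.
- by rewrite /Q integral_density_measure// integral_mscale.
- exact: integrable_density_measure.
- exact: integrable_mscale.
Qed.

Lemma Rintegral_mul_le_comp_homo {d} {T : measurableType d} {R : realType}
    {P : probability T R} {r : T -> R} {omega : R -> R} :
  measurable_fun setT r -> P.-integrable setT (EFin \o r) ->
  measurable_fun setT omega -> (forall x, 0 <= omega x <= 1) ->
  {homo omega : x y / x <= y} ->
  \int[P]_y r y * \int[P]_y omega (r y) <= \int[P]_y (r y * omega (r y)).
Proof.
move=> mr ir momega omega01 omega_homo.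
set m := \int[P]_y r y; set c := omega m.
have mw : measurable_fun setT (omega \o r) by exact: measurableT_comp.
have iw := integrable_unit_interval P mw (fun y => omega01 (r y)).
have irw := integrableMr_unit_interval mw (fun y => omega01 (r y)) ir.
have key : \int[P]_y (m * omega (r y) + c * r y) <= \int[P]_y (r y * omega (r y) + m * c).
  apply: le_Rintegral => //.
  - by apply: integrableD_EFin; exact: integrableZl_EFin.
  - by apply: integrableD_EFin => //; exact: finite_measure_integrable_cst.
  - move=> y _.
    have [le_mr|lt_rm] := leP m (r y).
    + have := omega_homo _ _ le_mr; rewrite -/c => hw; nra.
    + have := omega_homo _ _ (ltW lt_rm); rewrite -/c => hw; nra.
rewrite !RintegralD// ?RintegralZl// ?Rintegral_cst// in key;
  try by [exact: finite_measure_integrable_cst | exact: integrableZl_EFin].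
have P1 : fine (P setT) = 1 by rewrite probability_setT.
by rewrite P1 mulr1 -/m in key; lra.
Qed.

Local Open Scope ereal_scope.

Theorem proposition2 (R : realType) (d : measure_display) (Y : measurableType d)
  (Pm PM : probability Y R) (r : Y -> R) (omega : R -> R)
  (Prsd : {measure set Y -> \bar R})
  (mr : measurable_fun setT r)
  (ir_m : Pm.-integrable setT (fun y => (r y)%:E))
  (ir_M : PM.-integrable setT (fun y => (r y)%:E))
  (momega : measurable_fun setT omega)
  (omega01 : forall x, (0 <= omega x <= 1)%R)
  (omega_mono : {homo omega : x y / (x <= y)%R})
  (HPrsd : forall B, measurable B ->
     Prsd B = \int[Pm]_(y in B) (omega (r y))%:E
              + (1 - \int[Pm]_y (omega (r y))%:E) * PM B)
  (Hexp : \int[PM]_y (r y)%:E >= \int[Pm]_y (r y)%:E) :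
  \int[Prsd]_y (r y)%:E >= \int[Pm]_y (r y)%:E.
Proof.
pose w := omega \o r.
have mw : measurable_fun setT w by exact: measurableT_comp.
have w01 y : (0 <= w y <= 1)%R by exact: omega01.
have iw := integrable_unit_interval Pm mw w01.
have irw := integrableMr_unit_interval mw w01 ir_m.
set W := (\int[Pm]_y w y)%R.
have EW : \int[Pm]_y (w y)%:E = W%:E by rewrite EFin_Rintegral.
have W_le1 : (W <= 1)%R.
  by rewrite -lee_fin -EW -(probability_setT Pm); exact: density_measure_le.
have nu_ge0 : (0 <= 1 - W)%R by rewrite subr_ge0.
have PrsdE B : measurable B ->
    Prsd B = \int[Pm]_(y in B) (w y)%:E + (1 - W)%:E * PM B.
  by move=> mB; rewrite HPrsd// -/w EW EFinB.
rewrite (integral_mixture mw w01 nu_ge0 PrsdE ir_m ir_M).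
have -> : \int[Pm]_y ((r y)%:E * (w y)%:E) = (\int[Pm]_y (r y * w y))%:E.
  by rewrite EFin_Rintegral//; apply: eq_integral => y _; rewrite EFinM.
rewrite -(EFin_Rintegral ir_m) -(EFin_Rintegral ir_M) in Hexp *.
rewrite -EFinM -EFinD !lee_fin in Hexp *.
have := Rintegral_mul_le_comp_homo mr ir_m momega omega01 omega_mono.
by rewrite -/W; nra.
Qed.
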